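(* Let $\mathcal M$ be a class of metric families which is stable under inclusion, and let $\mathcal X$ be a metric family. The following are equivalent. \begin{itemize} \item[(i)] $\operatorname{asdim}_{\mathcal M}(\mathcal X)\leq n$; \item[(ii)] for every $R$, there is a cover $\mathcal U$ of $\mathcal X$ with $R$-multiplicity at most $n+1$, where every element of $\mathcal U$ is $2R$-connected and $\mathcal U \in \mathcal M.$ \end{itemize} Similarly, the following are equivalent: \begin{itemize} \item[(iii)] $\overline{\operatorname{asdim}}_{\mathcal M}(\mathcal X)\leq n$; \item[(iv)] for every $R$, there is a cover $\mathcal U$ of $\mathcal X$ with $R$-multiplicity at most $n+1$, where every element of $\mathcal U$ is $2R$-connected and for every $s>0$ and $m\geq 0$, $\{N^m_s(U)\mid U\in \mathcal U\} \in \mathcal M.$ \end{itemize}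
   Context: Metric families are collections of $1$-uniformly discrete bounded geometry metric spaces; $\mathcal M$ is stable under inclusion if subfamilies of families in $\mathcal M$ are in $\mathcal M$. $\operatorname{asdim}_{\mathcal M}(\mathcal X)\le n$ means for every $r$ there is $\mathcal Z\in\mathcal M$ with each $X\in\mathcal X$ written $X_0\cup\dots\cup X_n$, each $X_i$ a disjoint union of sets in $\mathcal Z$ pairwise at distance $\ge r$; $\overline{\operatorname{asdim}}_{\mathcal M}$ requires in addition $N^m_s(\mathcal Z)\in\mathcal M$ for all $m,s$, where $N^0_s(U)=U$ and $N^{k+1}_s(U)$ is the union of all members of the cover meeting the closed $s$-neighbourhood of $N^k_s(U)$. A cover has $R$-multiplicity at most $k$ if every closed $R$-ball in each $X$ meets at most $k$ of its sets; $U$ is $R$-connected if any two points are joined by a chain in $U$ with steps at most $R$. *)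

From Stdlib Require Import Reals List.
Open Scope R_scope.

(** A metric space, modelled set-theoretically: a set of points [pts] inside
    an ambient carrier type, together with a distance function.  Subspaces
    keep the same carrier and distance and shrink [pts], so a subspace of a
    subspace is literally a subspace (as in set theory). *)
Record space : Type := Space {
  car : Type;
  pts : car -> Prop;
  dist : car -> car -> R
}.

Definition sub (X : space) (U : car X -> Prop) : space :=
  Space (car X) U (dist X).

Definition mfamily := space -> Prop.

Definition is_metric (X : space) : Prop :=
  (forall x y, pts X x -> pts X y -> 0 <= dist X x y) /\
  (forall x y, pts X x -> pts X y -> (dist X x y = 0 <-> x = y)) /\
  (forall x y, pts X x -> pts X y -> dist X x y = dist X y x) /\
  (forall x y z, pts X x -> pts X y -> pts X z ->
     dist X x z <= dist X x y + dist X y z).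

Definition unif_discrete1 (X : space) : Prop :=
  forall x y, pts X x -> pts X y -> x <> y -> 1 <= dist X x y.

Definition bounded_geometry (X : space) : Prop :=
  forall r : R, exists N : nat, forall x, pts X x ->
    exists l : list (car X), (length l <= N)%nat /\
      forall y, pts X y -> dist X x y <= r -> In y l.

Definition metric_family (F : mfamily) : Prop :=
  forall X, F X -> is_metric X /\ unif_discrete1 X /\ bounded_geometry X.

Definition subfamily (G F : mfamily) : Prop :=
  forall Y, G Y -> exists Z (U : car Z -> Prop),
    F Z /\ (forall x, U x -> pts Z x) /\ Y = sub Z U.

Definition stable_under_inclusion (M : mfamily -> Prop) : Prop :=
  forall F G, M F -> subfamily G F -> M G.

Definition cover := forall X : space, (car X -> Prop) -> Prop.

Definition is_cover (F : mfamily) (C : cover) : Prop :=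
  forall X, F X ->
    (forall U, C X U -> forall x, U x -> pts X x) /\
    (forall x, pts X x -> exists U, C X U /\ U x).

Definition cover_family (F : mfamily) (C : cover) : mfamily :=
  fun Y => exists X U, F X /\ C X U /\ Y = sub X U.

Definition cball (X : space) (x : car X) (r : R) : car X -> Prop :=
  fun y => pts X y /\ dist X x y <= r.

Definition multiplicity_le (F : mfamily) (C : cover) (r : R) (k : nat) : Prop :=
  forall X, F X -> forall x, pts X x ->
    exists l : list (car X -> Prop), (length l <= k)%nat /\
      forall U, C X U -> (exists y, U y /\ cball X x r y) -> In U l.

Inductive chain (X : space) (U : car X -> Prop) (r : R) : car X -> car X -> Prop :=
| chain_refl x : U x -> chain X U r x x
| chain_step x y z : U x -> dist X x y <= r -> chain X U r y z -> chain X U r x z.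

Definition r_connected (X : space) (U : car X -> Prop) (r : R) : Prop :=
  forall x y, U x -> U y -> chain X U r x y.

Definition cnbhd (X : space) (A : car X -> Prop) (s : R) : car X -> Prop :=
  fun y => pts X y /\ exists a, A a /\ dist X a y <= s.

Fixpoint Nms (X : space) (C : (car X -> Prop) -> Prop) (s : R) (m : nat)
  (U : car X -> Prop) : car X -> Prop :=
  match m with
  | O => U
  | S k => fun y => exists V, C V /\ (exists z, V z /\ cnbhd X (Nms X C s k U) s z) /\ V y
  end.

Definition N_family (F : mfamily) (C : cover) (m : nat) (s : R) : mfamily :=
  fun Y => exists X U, F X /\ C X U /\ Y = sub X (Nms X (C X) s m U).

(** X = X_0 u ... u X_n, each X_i the disjoint union of the r-separated
    pieces D i (i <= n). *)
Definition r_decomposition (X : space) (n : nat) (r : R)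
  (D : nat -> (car X -> Prop) -> Prop) : Prop :=
  (forall i V, (i <= n)%nat -> D i V -> forall x, V x -> pts X x) /\
  (forall x, pts X x -> exists i V, (i <= n)%nat /\ D i V /\ V x) /\
  (forall i V W, (i <= n)%nat -> D i V -> D i W -> V <> W ->
     forall x y, V x -> W y -> r <= dist X x y).

Definition asdim_M_le (M : mfamily -> Prop) (F : mfamily) (n : nat) : Prop :=
  forall r : R, 0 < r -> exists Z : mfamily, M Z /\
    forall X, F X -> exists D : nat -> (car X -> Prop) -> Prop,
      r_decomposition X n r D /\
      (forall i V, (i <= n)%nat -> D i V -> Z (sub X V)).

Definition asdim_bar_M_le (M : mfamily -> Prop) (F : mfamily) (n : nat) : Prop :=
  forall r : R, 0 < r -> exists D : forall X : space, nat -> (car X -> Prop) -> Prop,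
    (forall X, F X -> r_decomposition X n r (D X)) /\
    let C : cover := fun X V => exists i, (i <= n)%nat /\ D X i V in
    M (cover_family F C) /\
    (forall (m : nat) (s : R), 0 < s -> M (N_family F C m s)).

(** (i) => (ii): take the [2R]-chain components of the [r]-separated pieces of
    an [r]-decomposition with [r > 2R].  Two points of a closed [R]-ball are
    [2R]-close, so they can only lie in components of the same colour if they
    lie in the same component; a ball thus meets at most one component of
    each of the [n+1] colours.

    (ii) => (i): given a cover of [R]-multiplicity at most [k] with
    [R = r 4^k], colour by induction on [k].  Call [x] saturated when [k]
    members of the cover meet the [2g]-ball around [x], where [4g = R].  Two
    saturated points at distance at most [2g] see exactly the same members
    (all of them meet the [4g]-ball around either point), so the saturated
    points that lie in a chosen member of their family form one new colour
    class, split into pieces of points with the same family; distinct pieces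
    are more than [2g >= r] apart.  The remaining points have [g]-multiplicity
    at most [k - 1]: if [k] members met the [g]-ball around a remaining point,
    that point would be saturated and its chosen member would meet the ball
    in a point of the new colour class.

    In both directions the new pieces refine the old ones, so stability under
    inclusion transfers membership in [M], also for the families [N^m_s]. *)
From Stdlib Require Import Reals List Lra Lia.
From Stdlib Require Import Classical ClassicalEpsilon FunctionalExtensionality PropExtensionality.
Open Scope R_scope.

Definition covers (X : space) (C : (car X -> Prop) -> Prop) : Prop :=
  forall x, pts X x -> exists U, C U /\ U x.

Definition ball_multiplicity_le (X : space) (C : (car X -> Prop) -> Prop)
  (r : R) (k : nat) : Prop :=
  forall x, pts X x -> exists l : list (car X -> Prop), (length l <= k)%nat /\
    forall U, C U -> (exists y, U y /\ cball X x r y) -> In U l.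

Definition refines {A : Type} (C' C : (A -> Prop) -> Prop) : Prop :=
  forall V, C' V -> exists U, C U /\ forall x, V x -> U x.

Definition pieces {A : Type} (n : nat) (D : nat -> (A -> Prop) -> Prop) : (A -> Prop) -> Prop :=
  fun V => exists i, (i <= n)%nat /\ D i V.

Definition choose_set {A : Type} (P : (A -> Prop) -> Prop) : A -> Prop :=
  epsilon (inhabits (fun _ : A => False)) P.

Lemma choose_set_spec {A : Type} (P : (A -> Prop) -> Prop) :
  (exists U, P U) -> P (choose_set P).
Proof. apply epsilon_spec. Qed.

Lemma exists_NoDup_filter {A : Type} (P : A -> Prop) (l : list A) :
  exists l', NoDup l' /\ forall a, In a l' <-> In a l /\ P a.
Proof.
  induction l as [|a l [l' [Hnd Hin]]].
  - exists nil. split; [constructor | simpl; tauto].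
  - destruct (classic (P a /\ ~ In a l')) as [[Pa Hnew] | Hold].
    + exists (a :: l'). split; [now constructor |].
      intros b; simpl; rewrite Hin. split.
      * intros [<- | Hb]; tauto.
      * intros [[<- | Hb] HPb]; tauto.
    + exists l'. split; [exact Hnd |]. intros b; simpl; rewrite Hin. split.
      * tauto.
      * intros [[<- | Hb] HPb]; [| tauto].
        apply NNPP; intros Hnot; apply Hold; split; [exact HPb |].
        now rewrite Hin.
Qed.

Lemma is_metric_dist_refl (X : space) x : is_metric X -> pts X x -> dist X x x = 0.
Proof. intros [_ [Hz _]] Px. now apply (Hz x x Px Px). Qed.

Lemma is_metric_sub (X : space) (Y : car X -> Prop) :
  is_metric X -> (forall x, Y x -> pts X x) -> is_metric (sub X Y).
Proof.
  intros [Hnn [Hz [Hs Ht]]] HY; repeat split; simpl; intros.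
  - apply Hnn; auto.
  - now apply Hz; auto.
  - now apply Hz; auto.
  - apply Hs; auto.
  - apply Ht; auto.
Qed.

Section Chains.

Variables (X : space) (V : car X -> Prop) (s : R).

Lemma chain_first a b : chain X V s a b -> V a.
Proof. now intros []. Qed.

Lemma chain_last a b : chain X V s a b -> V b.
Proof. intros H; induction H; auto. Qed.

Lemma chain_trans a b c : chain X V s a b -> chain X V s b c -> chain X V s a c.
Proof. intros H; induction H; intros; auto. eapply chain_step; eauto. Qed.

Hypothesis dist_sym_V : forall x y, V x -> V y -> dist X x y = dist X y x.

Lemma chain_sym a b : chain X V s a b -> chain X V s b a.
Proof.
  intros H; induction H as [x Vx | x y z Vx Dxy Cyz IH].
  - now apply chain_refl.
  - apply (chain_trans _ _ _ IH).
    pose proof (chain_first _ _ Cyz) as Vy.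
    apply chain_step with x; [exact Vy | rewrite dist_sym_V; auto | now apply chain_refl].
Qed.

Definition chain_component (o : car X) : car X -> Prop := chain X V s o.

Lemma chain_component_sub o x : chain_component o x -> V x.
Proof. apply chain_last. Qed.

Lemma chain_component_eq o o' : chain X V s o o' -> chain_component o = chain_component o'.
Proof.
  intros Coo'.
  apply functional_extensionality; intros x; apply propositional_extensionality; split.
  - exact (chain_trans _ _ _ (chain_sym _ _ Coo')).
  - exact (chain_trans _ _ _ Coo').
Qed.

Lemma chain_component_connected o : r_connected X (chain_component o) s.
Proof.
  intros a b Coa Cob.
  assert (Cab : chain X V s a b) by exact (chain_trans _ _ _ (chain_sym _ _ Coa) Cob).
  clear Cob; induction Cab as [x Vx | x y z Vx Dxy Cyz IH].
  - now apply chain_refl.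
  - apply chain_step with y; [exact Coa | exact Dxy |].
    apply IH, (chain_trans _ _ _ Coa).
    apply chain_step with y; [exact Vx | exact Dxy | apply chain_refl, (chain_first _ _ Cyz)].
Qed.

End Chains.

Section ChainComponents.

Variables (X : space) (n : nat) (r t : R) (D : nat -> (car X -> Prop) -> Prop).
Hypothesis X_metric : is_metric X.
Hypothesis D_decomposition : r_decomposition X n t D.
Hypothesis separation : 2 * r < t.

Definition colour_components (i : nat) (W : car X -> Prop) : Prop :=
  exists V x, D i V /\ V x /\ W = chain_component X V (2 * r) x.

Definition chain_components : (car X -> Prop) -> Prop :=
  fun W => exists i, (i <= n)%nat /\ colour_components i W.

Lemma piece_sub_pts i V x : (i <= n)%nat -> D i V -> V x -> pts X x.
Proof. destruct D_decomposition as [HD _]; eauto. Qed.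

Lemma piece_dist_sym i V : (i <= n)%nat -> D i V ->
  forall x y, V x -> V y -> dist X x y = dist X y x.
Proof.
  destruct X_metric as [_ [_ [Hs _]]].
  intros Hi DV x y Vx Vy; apply Hs; eapply piece_sub_pts; eauto.
Qed.

Lemma chain_components_refine : refines chain_components (pieces n D).
Proof.
  intros W [i [Hi [V [x [DV [Vx ->]]]]]].
  exists V; split; [now exists i | apply chain_component_sub].
Qed.

Lemma chain_components_covers : covers X chain_components.
Proof.
  intros x Px. destruct D_decomposition as [_ [Hcov _]].
  destruct (Hcov x Px) as [i [V [Hi [DV Vx]]]].
  exists (chain_component X V (2 * r) x).
  split; [exists i; split; [exact Hi | now exists V, x] | now apply chain_refl].
Qed.

Lemma chain_components_sub_pts W : chain_components W -> forall x, W x -> pts X x.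
Proof.
  intros HW x Wx. destruct (chain_components_refine W HW) as [V [[i [Hi DV]] HWV]].
  eapply piece_sub_pts; eauto.
Qed.

Lemma chain_components_connected W : chain_components W -> r_connected X W (2 * r).
Proof.
  intros [i [Hi [V [x [DV [_ ->]]]]]].
  exact (chain_component_connected _ _ _ (piece_dist_sym i V Hi DV) x).
Qed.

Lemma colour_component_unique i x W W' : (i <= n)%nat -> pts X x ->
  colour_components i W -> colour_components i W' ->
  (exists y, W y /\ cball X x r y) -> (exists y, W' y /\ cball X x r y) -> W = W'.
Proof.
  intros Hi Px [V [x0 [DV [_ ->]]]] [V' [x1 [DV' [_ ->]]]]
    [y [Cy [Py Dxy]]] [y' [Cy' [Py' Dxy']]].
  destruct X_metric as [_ [_ [Hs Ht]]].
  assert (Dyy' : dist X y y' <= 2 * r).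
  { pose proof (Ht y x y' Py Px Py'). rewrite (Hs y x Py Px) in *. lra. }
  assert (EV : V = V').
  { apply NNPP; intros Hne. destruct D_decomposition as [_ [_ Hsep]].
    pose proof (Hsep i V V' Hi DV DV' Hne y y'
      (chain_component_sub _ _ _ _ _ Cy) (chain_component_sub _ _ _ _ _ Cy')). lra. }
  subst V'.
  apply chain_component_eq; [apply (piece_dist_sym i V Hi DV) |].
  apply (chain_trans _ _ _ _ _ _ Cy).
  apply chain_step with y'; [exact (chain_last _ _ _ _ _ Cy) | exact Dyy' |].
  exact (chain_sym _ _ _ (piece_dist_sym i V Hi DV) _ _ Cy').
Qed.

Lemma chain_components_multiplicity : ball_multiplicity_le X chain_components r (S n).
Proof.
  intros x Px.
  pose (pick i := choose_set (fun W => colour_components i W /\ exists y, W y /\ cball X x r y)).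
  exists (map pick (seq 0 (S n))). split; [now rewrite length_map, length_seq |].
  intros W [i [Hi HW]] HWx.
  apply in_map_iff. exists i. split; [| apply in_seq; lia].
  assert (Hpick : colour_components i (pick i) /\ exists y, pick i y /\ cball X x r y).
  { apply choose_set_spec. now exists W. }
  exact (colour_component_unique i x _ _ Hi Px (proj1 Hpick) HW (proj2 Hpick) HWx).
Qed.

End ChainComponents.

Definition coloured_cover (X : space) (k : nat) (r : R)
  (D : nat -> (car X -> Prop) -> Prop) : Prop :=
  (forall i V, D i V -> (i < k)%nat /\ forall x, V x -> pts X x) /\
  (forall x, pts X x -> exists i V, D i V /\ V x) /\
  (forall i V W, D i V -> D i W -> V <> W -> forall x y, V x -> W y -> r <= dist X x y).

Section TopLayer.

Variables (X : space) (C : (car X -> Prop) -> Prop) (k : nat) (g : R).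
Hypothesis X_metric : is_metric X.
Hypothesis g_ge0 : 0 <= g.
Hypothesis C_multiplicity : ball_multiplicity_le X C (4 * g) (S k).

Definition meets_ball (x : car X) (t : R) (U : car X -> Prop) : Prop :=
  C U /\ exists y, U y /\ cball X x t y.

Lemma meets_ball_le x t t' U : t <= t' -> meets_ball x t U -> meets_ball x t' U.
Proof. intros Htt' [CU [y [Uy [Py Dy]]]]. split; [exact CU |]. exists y; repeat split; auto; lra. Qed.

Lemma meets_ball_shift x y t U : pts X x -> pts X y ->
  meets_ball y t U -> meets_ball x (dist X x y + t) U.
Proof.
  destruct X_metric as [_ [_ [_ Ht]]].
  intros Px Py [CU [z [Uz [Pz Dz]]]]. split; [exact CU |].
  exists z; repeat split; auto. pose proof (Ht x y z Px Py Pz). lra.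
Qed.

Definition saturated (x : car X) : Prop :=
  exists l, NoDup l /\ length l = S k /\ forall U, In U l -> meets_ball x (2 * g) U.

Lemma saturated_meets_ball_eq x y : pts X x -> pts X y -> saturated x -> saturated y ->
  dist X x y <= 2 * g -> meets_ball x (2 * g) = meets_ball y (2 * g).
Proof.
  intros Px Py Sx Sy Dxy.
  destruct (C_multiplicity x Px) as [l [Hl Hin]].
  assert (Hnear : forall z, pts X z -> dist X x z <= 2 * g ->
            forall U, meets_ball z (2 * g) U -> In U l).
  { intros z Pz Dxz U HU.
    assert (Hle : dist X x z + 2 * g <= 4 * g) by lra.
    destruct (meets_ball_le x _ _ U Hle (meets_ball_shift x z _ U Px Pz HU)) as [CU HUx].
    exact (Hin U CU HUx). }
  (* [l] has at most [S k] entries, so a saturated point near [x] sees all of them. *)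
  assert (Hall : forall z, pts X z -> dist X x z <= 2 * g -> saturated z ->
            forall U, In U l <-> meets_ball z (2 * g) U).
  { intros z Pz Dxz [lz [Nlz [Llz Hlz]]] U. split.
    - intros HU. apply Hlz. revert HU.
      apply (NoDup_length_incl Nlz); [lia |]. intros V HV. exact (Hnear z Pz Dxz V (Hlz V HV)).
    - exact (Hnear z Pz Dxz U). }
  apply functional_extensionality; intros U; apply propositional_extensionality.
  assert (Dxx : dist X x x <= 2 * g) by (rewrite (is_metric_dist_refl X x X_metric Px); lra).
  rewrite <- (Hall x Px Dxx Sx), <- (Hall y Py Dxy Sy); tauto.
Qed.

Lemma saturated_choose_meets_ball x :
  saturated x -> meets_ball x (2 * g) (choose_set (meets_ball x (2 * g))).
Proof.
  intros [[| U l] [_ [Hlen Hl]]]; [discriminate |].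
  apply choose_set_spec. exists U. apply Hl; now left.
Qed.

Definition top_layer (x : car X) : Prop :=
  pts X x /\ saturated x /\ choose_set (meets_ball x (2 * g)) x.

Definition top_class (x : car X) : car X -> Prop :=
  fun y => top_layer y /\ meets_ball y (2 * g) = meets_ball x (2 * g).

Lemma top_classes_separated x0 x1 a b : top_class x0 <> top_class x1 ->
  top_class x0 a -> top_class x1 b -> 2 * g < dist X a b.
Proof.
  intros Hne [[Pa [Sa _]] Ea] [[Pb [Sb _]] Eb].
  apply Rnot_le_lt; intros Dab. apply Hne.
  assert (E : meets_ball x0 (2 * g) = meets_ball x1 (2 * g)).
  { rewrite <- Ea, <- Eb. now apply saturated_meets_ball_eq. }
  unfold top_class; now rewrite E.
Qed.

Lemma top_class_refines x0 : top_layer x0 ->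
  exists U, C U /\ forall y, top_class x0 y -> U y.
Proof.
  intros [_ [Sx0 _]]. exists (choose_set (meets_ball x0 (2 * g))). split.
  - exact (proj1 (saturated_choose_meets_ball x0 Sx0)).
  - intros y [[_ [_ Hy]] Ey]. now rewrite Ey in Hy.
Qed.

Definition remainder (x : car X) : Prop := pts X x /\ ~ top_layer x.

Lemma remainder_multiplicity : ball_multiplicity_le (sub X remainder) C g k.
Proof.
  destruct X_metric as [_ [_ [Hs _]]].
  intros x [Px Rx].
  destruct (C_multiplicity x Px) as [l [Hl Hin]].
  destruct (exists_NoDup_filter (fun U => C U /\ exists y, U y /\ cball (sub X remainder) x g y) l)
    as [l' [Nl' Hl']].
  assert (Hsmall : forall U, C U -> (exists y, U y /\ cball (sub X remainder) x g y) ->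
            meets_ball x g U).
  { intros U CU [y [Uy [[Py _] Dy]]]. split; [exact CU |]. now exists y. }
  assert (Hincl : incl l' l) by (intros U HU; apply Hl', HU).
  destruct (Nat.le_gt_cases (length l') k) as [Hle | Hgt].
  { exists l'. split; [exact Hle |]. intros U CU HU. apply Hl'. split; [| now split].
    apply Hin; [exact CU |]. apply (meets_ball_le x g); [lra | now apply Hsmall]. }
  exfalso.
  pose proof (NoDup_incl_length Nl' Hincl) as Hlen.
  assert (Hl'x : forall U, In U l' -> meets_ball x g U)
    by (intros U HU; apply Hl' in HU as [_ [CU HU]]; now apply Hsmall).
  assert (Sx : saturated x).
  { exists l'. split; [exact Nl' | split; [lia |]].
    intros U HU. apply (meets_ball_le x g); [lra | now apply Hl'x]. }
  (* The chosen member of [x] meets the small ball around [x] at a remaining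
     point [y], which then belongs to the top layer. *)
  set (U0 := choose_set (meets_ball x (2 * g))).
  assert (HU0 : In U0 l').
  { apply (NoDup_length_incl Nl' (l' := l)); [lia | exact Hincl |].
    destruct (meets_ball_le x (2 * g) (4 * g) U0 ltac:(lra) (saturated_choose_meets_ball x Sx))
      as [CU0 HU0].
    exact (Hin U0 CU0 HU0). }
  apply Hl' in HU0 as [_ [_ [y [U0y [[Py Ry] Dxy]]]]]; simpl in Dxy.
  assert (Sy : saturated y).
  { exists l'. split; [exact Nl' | split; [lia |]]. intros U HU.
    apply (meets_ball_le y (dist X y x + g)); [rewrite Hs; auto; lra |].
    apply meets_ball_shift; auto. }
  apply Ry. repeat split; [exact Py | exact Sy |].
  rewrite <- (saturated_meets_ball_eq x y); auto; lra.
Qed.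

Lemma coloured_cover_add_top_layer r D0 : r <= 2 * g ->
  coloured_cover (sub X remainder) k r D0 -> (forall i, refines (D0 i) C) ->
  exists D, coloured_cover X (S k) r D /\ forall i, refines (D i) C.
Proof.
  intros Hrg [D0col [D0cov D0sep]] D0ref.
  set (D i V := D0 i V \/ (i = k /\ exists x, top_layer x /\ V = top_class x)).
  exists D. split; [split; [| split] |].
  - intros i V [HV | [-> [x0 [_ ->]]]].
    + destruct (D0col i V HV) as [Hi HVY]. split; [lia | intros x Vx; apply HVY, Vx].
    + split; [lia | now intros x [[Px _] _]].
  - intros x Px. destruct (classic (top_layer x)) as [Tx | nTx].
    + exists k, (top_class x). split; [right; split; [reflexivity | now exists x] |].
      now split.
    + destruct (D0cov x (conj Px nTx)) as [i [V [HV Vx]]]. exists i, V. now split; [left |].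
  - intros i V W [HV | [-> [x0 [_ ->]]]] [HW | [Hi [x1 [_ ->]]]] Hne x y Vx Wy.
    + exact (D0sep i V W HV HW Hne x y Vx Wy).
    + apply D0col in HV; lia.
    + apply D0col in HW; lia.
    + pose proof (top_classes_separated x0 x1 x y Hne Vx Wy). lra.
  - intros i V [HV | [_ [x0 [Tx0 ->]]]].
    + exact (D0ref i V HV).
    + exact (top_class_refines x0 Tx0).
Qed.

End TopLayer.

Lemma coloured_refinement (k : nat) : forall (X : space) (C : (car X -> Prop) -> Prop) (r : R),
  is_metric X -> 0 <= r -> covers X C -> ball_multiplicity_le X C (r * 4 ^ k) k ->
  exists D, coloured_cover X k r D /\ forall i, refines (D i) C.
Proof.
  induction k as [| k IH]; intros X C r HX Hr Hcov Hmult.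
  - exists (fun _ _ => False). split; [| now intros i V []].
    split; [tauto | split; [| tauto]].
    intros x Px; exfalso.
    destruct (Hcov x Px) as [U [CU Ux]], (Hmult x Px) as [[| V l] [Hl Hin]]; [| simpl in Hl; lia].
    apply (Hin U CU). exists x. repeat split; auto.
    rewrite (is_metric_dist_refl X x HX Px); simpl; lra.
  - set (g := r * 4 ^ k).
    assert (Hrg : r <= g) by (assert (1 <= 4 ^ k) by (apply pow_R1_Rle; lra); unfold g; nra).
    assert (Hmult' : ball_multiplicity_le X C (4 * g) (S k))
      by (replace (4 * g) with (r * 4 ^ S k) by (unfold g; simpl; ring); exact Hmult).
    set (Y := remainder X C k g).
    destruct (IH (sub X Y) C r) as [D0 [HD0 D0ref]].
    + apply is_metric_sub; [exact HX | now intros x []].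
    + exact Hr.
    + intros x [Px _]; exact (Hcov x Px).
    + apply (remainder_multiplicity X C k g HX ltac:(lra) Hmult').
    + exact (coloured_cover_add_top_layer X C k g HX ltac:(lra) Hmult' r D0 ltac:(lra) HD0 D0ref).
Qed.

Lemma family_choice (F : mfamily) (B : space -> Type) (P : forall X, B X -> Prop) :
  (forall X, inhabited (B X)) -> (forall X, F X -> exists b, P X b) ->
  exists f : forall X, B X, forall X, F X -> P X (f X).
Proof.
  intros Hinh HP.
  exists (fun X => epsilon (Hinh X) (fun b => F X -> P X b)).
  intros X FX. apply (epsilon_spec (Hinh X) (fun b => F X -> P X b)); [| exact FX].
  destruct (HP X FX) as [b Hb]. now exists b.
Qed.

Lemma refining_decomposition (F : mfamily) (n : nat) (r : R) (C : cover) :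
  metric_family F -> 0 <= r -> is_cover F C -> multiplicity_le F C (r * 4 ^ S n) (S n) ->
  exists D : forall X, nat -> (car X -> Prop) -> Prop, forall X, F X ->
    r_decomposition X n r (D X) /\ refines (pieces n (D X)) (C X).
Proof.
  intros HF Hr HC Hmult.
  apply (family_choice F (fun X => nat -> (car X -> Prop) -> Prop)
    (fun X D => r_decomposition X n r D /\ refines (pieces n D) (C X)));
    [intros X; exact (inhabits (fun _ _ => False)) |].
  intros X FX.
  destruct (coloured_refinement (S n) X (C X) r (proj1 (HF X FX)) Hr (proj2 (HC X FX))
    (Hmult X FX)) as [D [[Dcol [Dcov Dsep]] Dref]].
  exists D. split; [split; [| split] |].
  - intros i V _ DV. apply (Dcol i V DV).
  - intros x Px. destruct (Dcov x Px) as [i [V [DV Vx]]].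
    exists i, V. split; [apply Dcol in DV; lia | auto].
  - intros i V W _. apply Dsep.
  - intros V [i [_ DV]]. exact (Dref i V DV).
Qed.

Definition chain_component_cover (n : nat) (r : R)
  (D : forall X : space, nat -> (car X -> Prop) -> Prop) : cover :=
  fun X => chain_components X n r (D X).

Lemma chain_component_cover_spec (F : mfamily) (n : nat) (r t : R)
  (D : forall X : space, nat -> (car X -> Prop) -> Prop) :
  metric_family F -> 2 * r < t -> (forall X, F X -> r_decomposition X n t (D X)) ->
  let C := chain_component_cover n r D in
  is_cover F C /\ multiplicity_le F C r (S n) /\
  (forall X U, F X -> C X U -> r_connected X U (2 * r)) /\
  (forall X, F X -> refines (C X) (pieces n (D X))).
Proof.
  intros HF Ht HD C.
  split; [| split; [| split]].
  - intros X FX. split; [apply (chain_components_sub_pts X n r t (D X) (HD X FX)) |].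
    exact (chain_components_covers X n r t (D X) (HD X FX)).
  - intros X FX.
    exact (chain_components_multiplicity X n r t (D X) (proj1 (HF X FX)) (HD X FX) Ht).
  - intros X U FX. exact (chain_components_connected X n r t (D X) (proj1 (HF X FX)) (HD X FX) U).
  - intros X _. exact (chain_components_refine X n r (D X)).
Qed.

Lemma Nms_refine (X : space) (C' C : (car X -> Prop) -> Prop) (s : R) :
  refines C' C -> forall m (A B : car X -> Prop), (forall y, A y -> B y) ->
  forall y, Nms X C' s m A y -> Nms X C s m B y.
Proof.
  intros Href m; induction m as [| m IH]; intros A B HAB y; simpl; [apply HAB |].
  intros [V [C'V [[z [Vz [Pz [a [Aa Daz]]]]] Vy]]].
  destruct (Href V C'V) as [U [CU HVU]].
  exists U. repeat split; auto.
  exists z. repeat split; auto. exists a. split; [exact (IH A B HAB a Aa) | exact Daz].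
Qed.

Lemma subfamily_of_incl (G H : mfamily) : (forall Y, G Y -> H Y) -> subfamily G H.
Proof. intros HGH Y GY. exists Y, (pts Y). destruct Y; auto. Qed.

Lemma subfamily_N_family (F : mfamily) (C' C : cover) (m : nat) (s : R) :
  (forall X, F X -> refines (C' X) (C X)) -> subfamily (N_family F C' m s) (N_family F C m s).
Proof.
  intros Href Y [X [V [FX [C'V ->]]]].
  destruct (Href X FX V C'V) as [U [CU HVU]].
  exists (sub X (Nms X (C X) s m U)), (Nms X (C' X) s m V).
  split; [now exists X, U |]. split; [| reflexivity].
  exact (Nms_refine X (C' X) (C X) s (Href X FX) m V U HVU).
Qed.

Lemma subfamily_cover_family (F : mfamily) (C' C : cover) :
  (forall X, F X -> refines (C' X) (C X)) -> subfamily (cover_family F C') (cover_family F C).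
Proof. exact (subfamily_N_family F C' C 0 0). Qed.

Theorem proposition2p12 (M : mfamily -> Prop) (F : mfamily) (n : nat) :
  (forall Z, M Z -> metric_family Z) ->
  stable_under_inclusion M ->
  metric_family F ->
  (asdim_M_le M F n <->
     (forall r : R, 0 < r -> exists C : cover,
        is_cover F C /\ multiplicity_le F C r (S n) /\
        (forall X U, F X -> C X U -> r_connected X U (2 * r)) /\
        M (cover_family F C)))
  /\
  (asdim_bar_M_le M F n <->
     (forall r : R, 0 < r -> exists C : cover,
        is_cover F C /\ multiplicity_le F C r (S n) /\
        (forall X U, F X -> C X U -> r_connected X U (2 * r)) /\
        (forall (m : nat) (s : R), 0 < s -> M (N_family F C m s)))).
Proof.
  (* The argument never needs the members of [M] to be metric families. *)
  intros _ Hstab HF.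
  assert (Hpos : forall r, 0 < r -> 0 < r * 4 ^ S n)
    by (intros r Hr; apply Rmult_lt_0_compat; [exact Hr | apply pow_lt; lra]).
  split; split.
  - intros Has r Hr.
    destruct (Has (2 * r + 1) ltac:(lra)) as [Z [MZ HZ]].
    destruct (family_choice F (fun X => nat -> (car X -> Prop) -> Prop) _
      (fun X => inhabits (fun _ _ => False)) HZ) as [D HD].
    destruct (chain_component_cover_spec F n r (2 * r + 1) D HF ltac:(lra) (fun X FX => proj1 (HD X FX)))
      as [Hcov [Hmult [Hconn Href]]].
    exists (chain_component_cover n r D). refine (conj Hcov (conj Hmult (conj Hconn _))).
    refine (Hstab _ _ _ (subfamily_cover_family F _ _ Href)).
    refine (Hstab Z _ MZ (subfamily_of_incl _ _ _)).
    intros Y [X [V [FX [[i [Hi DV]] ->]]]]. exact (proj2 (HD X FX) i V Hi DV).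
  - intros H2 r Hr.
    destruct (H2 (r * 4 ^ S n) (Hpos r Hr)) as [C [HC [Hmult [_ MC]]]].
    destruct (refining_decomposition F n r C HF (Rlt_le _ _ Hr) HC Hmult) as [D HD].
    exists (cover_family F (fun X => pieces n (D X))). split.
    + exact (Hstab _ _ MC (subfamily_cover_family F _ _ (fun X FX => proj2 (HD X FX)))).
    + intros X FX. exists (D X). split; [exact (proj1 (HD X FX)) |].
      intros i V Hi DV. exists X, V. repeat split; auto. now exists i.
  - intros Hbar r Hr.
    destruct (Hbar (2 * r + 1) ltac:(lra)) as [D [HD [_ MN]]].
    destruct (chain_component_cover_spec F n r (2 * r + 1) D HF ltac:(lra) HD)
      as [Hcov [Hmult [Hconn Href]]].
    exists (chain_component_cover n r D). refine (conj Hcov (conj Hmult (conj Hconn _))).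
    intros m s Hs. exact (Hstab _ _ (MN m s Hs) (subfamily_N_family F _ _ m s Href)).
  - intros H4 r Hr.
    destruct (H4 (r * 4 ^ S n) (Hpos r Hr)) as [C [HC [Hmult [_ MN]]]].
    destruct (refining_decomposition F n r C HF (Rlt_le _ _ Hr) HC Hmult) as [D HD].
    assert (Href : forall X, F X -> refines (pieces n (D X)) (C X)) by apply HD.
    exists D. split; [apply HD | split].
    + exact (Hstab _ _ (MN 0%nat 1 Rlt_0_1) (subfamily_N_family F _ _ 0 1 Href)).
    + intros m s Hs. exact (Hstab _ _ (MN m s Hs) (subfamily_N_family F _ _ m s Href)).
Qed.
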